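(* As $n\to\infty$: (i) for fixed $j\ge1$, $\mathbb{E}[D_{n,j}]\sim \frac{\Gamma(j-1/2)}{\Gamma(j)}\,n^{1/2}$ and $\operatorname{Var}[D_{n,j}]\sim\left(\frac{4}{2j-1}-\frac{\Gamma^2(j-1/2)}{\Gamma^2(j)}\right)n$; (ii) if $j=j(n)\le n$ with $j\to\infty$, then $\mathbb{E}[D_{n,j}]\sim (n/j)^{1/2}$; (iii) if $j=j(n)\to\infty$ with $j=o(n)$, then $\operatorname{Var}[D_{n,j}]\sim n/j$; (iv) if $j=j(n)$ with $j/n\to\theta\in(0,1)$, then $\operatorname{Var}[D_{n,j}]\to 1/\theta-1/\sqrt{\theta}$.
   Context: A plane-oriented recursive tree (PORT) is the random sequence of trees $(T_n)_{n\ge1}$ defined as follows. $T_1$ is a single node labeled $1$ (the root). For $n\ge2$, $T_n$ is obtained from $T_{n-1}$ by adding a node labeled $n$ and an edge joining it to a node $i\in\{1,\dots,n-1\}$ of $T_{n-1}$, where, conditionally on $T_1,\dots,T_{n-1}$, node $i$ is chosen with probability $(c_{n-1,i}+1)/(2n-3)$, with $c_{n-1,i}$ the number of children of $i$ in $T_{n-1}$. $D_{n,j}$ denotes the degree of the node labeled $j$ in $T_n$. $a_n\sim b_n$ means $a_n/b_n\to1$. *)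

From Stdlib Require Import Reals Lra List Arith.
Import ListNotations.
Open Scope R_scope.

(* A history of the PORT up to T_n is the list h of parents
   [p_2; p_3; ...; p_n], where p_k in {1,...,k-1} is the node that node k
   attached to. *)
Definition children (i : nat) (h : list nat) : nat := count_occ Nat.eq_dec h i.

(* All possible histories producing T_n (n >= 1); hist 0 is a dummy. *)
Fixpoint hist (n : nat) : list (list nat) :=
  match n with
  | O => [[]]
  | S O => [[]]
  | S m => flat_map (fun h => map (fun i => h ++ [i]) (seq 1 m)) (hist m)
  end.

(* Probability of a history: node k (k >= 2) attaches to i with probability
   (c_{k-1,i} + 1) / (2k - 3). *)
Fixpoint weight_rev (r : list nat) : R :=
  match r with
  | [] => 1
  | i :: r' =>
      (* r = rev h, h = rev r' ++ [i]; node added has label k = length r' + 2 *)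
      weight_rev r' * (INR (children i r') + 1) / (2 * INR (length r' + 2) - 3)
  end.
Definition weight (h : list nat) : R := weight_rev (rev h).

(* Degree (number of neighbours) of node j in the tree with history h:
   its children, plus the edge to its parent when j >= 2. *)
Definition deg (j : nat) (h : list nat) : nat :=
  (children j h + (if Nat.leb 2 j then 1 else 0))%nat.

Definition Expect (n : nat) (f : list nat -> R) : R :=
  fold_right Rplus 0 (map (fun h => weight h * f h) (hist n)).

Definition ED (n j : nat) : R := Expect n (fun h => INR (deg j h)).
Definition VarD (n j : nat) : R :=
  Expect n (fun h => INR (deg j h) ^ 2) - (ED n j) ^ 2.

Definition asym (a b : nat -> R) : Prop := Un_cv (fun n => a n / b n) 1.

Definition nat_to_infty (j : nat -> nat) : Prop :=
  forall M : nat, exists N : nat, forall n : nat, (N <= n)%nat -> (M <= j n)%nat.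

(* Gamma at half-integers: gamma_half k = Gamma(k + 1/2), via
   Gamma(1/2) = sqrt pi and Gamma(x+1) = x Gamma(x). *)
Fixpoint gamma_half (k : nat) : R :=
  match k with
  | O => sqrt PI
  | S k' => (INR k' + / 2) * gamma_half k'
  end.
Definition gamma_nat (j : nat) : R := INR (fact (j - 1)).

Definition gratio (j : nat) : R := gamma_half (j - 1) / gamma_nat j.

(* Attaching node n+1 to j with probability (c+1)/(2n-1), where c = c_{n,j}, gives for every g
   the one-step identity  E g(c_{n+1,j}) = E [g(c) + (c+1)/(2n-1) (g(c+1) - g(c))].
   For g(c) = c+1 and g(c) = (c+1)(c+2) it closes into linear recursions, solved by
   W_j(n) = prod_{k=j}^{n-1} 2k/(2k-1) and by 2(2n-1)/(2j-1); hence E D_{n,j} = W_j(n) + [j >= 2] - 1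
   and Var D_{n,j} = 2(2n-1)/(2j-1) - W_j(n) - W_j(n)^2.  For fixed j, W_j(n) = W_1(n)/W_1(j), and
   Wallis' integrals of sin^n give W_1(n)^2 ~ pi n, while W_1(j) Gamma(j-1/2) = sqrt(pi) (j-1)!
   produces the constant Gamma(j-1/2)/Gamma(j).  When j -> infinity, the telescoping bounds
   (2n-1)/(2j-1) <= W_j(n)^2 <= (n-1)/(j-1) give W_j(n)^2 ~ n/j. *)

From Stdlib Require Import Reals Lra Lia List.
From Coquelicot Require Import Coquelicot.
Open Scope R_scope.
Import ListNotations.

Definition sum_list {A} (l : list A) (g : A -> R) : R := fold_right Rplus 0 (map g l).

Section SumList.
Context {A : Type}.

Lemma sum_list_cons x (l : list A) g : sum_list (x :: l) g = g x + sum_list l g.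
Proof. reflexivity. Qed.

Lemma sum_list_app (l1 l2 : list A) g : sum_list (l1 ++ l2) g = sum_list l1 g + sum_list l2 g.
Proof. unfold sum_list; induction l1; simpl; [ring | rewrite IHl1; ring]. Qed.

Lemma sum_list_flat_map {B} (l : list B) (F : B -> list A) g :
  sum_list (flat_map F l) g = sum_list l (fun x => sum_list (F x) g).
Proof. induction l; simpl; [reflexivity | now rewrite sum_list_app, IHl]. Qed.

Lemma sum_list_map {B} (l : list B) (F : B -> A) g :
  sum_list (map F l) g = sum_list l (fun x => g (F x)).
Proof. unfold sum_list; now rewrite map_map. Qed.

Lemma sum_list_ext (l : list A) g k :
  (forall x, In x l -> g x = k x) -> sum_list l g = sum_list l k.
Proof.
  unfold sum_list; induction l; simpl; intros H; [reflexivity|].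
  rewrite H, IHl by auto; reflexivity.
Qed.

Lemma sum_list_plus (l : list A) g k :
  sum_list l (fun x => g x + k x) = sum_list l g + sum_list l k.
Proof. unfold sum_list; induction l; simpl; [ring | rewrite IHl; ring]. Qed.

Lemma sum_list_scal (l : list A) c g : sum_list l (fun x => c * g x) = c * sum_list l g.
Proof. unfold sum_list; induction l; simpl; [ring | rewrite IHl; ring]. Qed.

Lemma sum_list_zero (l : list A) g : (forall x, In x l -> g x = 0) -> sum_list l g = 0.
Proof.
  intros H; rewrite (sum_list_ext l g (fun _ => 0)) by auto.
  unfold sum_list; clear H; induction l; simpl; [reflexivity | rewrite IHl; ring].
Qed.

End SumList.

Lemma sum_list_seq_const a n c : sum_list (seq a n) (fun _ => c) = INR n * c.
Proof.
  revert a; induction n; intros a; unfold sum_list in *; simpl; [ring|].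
  rewrite IHn; destruct n; simpl; ring.
Qed.

Lemma sum_list_seq_indicator a n x c : (a <= x < a + n)%nat ->
  sum_list (seq a n) (fun i => if Nat.eq_dec i x then c else 0) = c.
Proof.
  revert a; induction n; intros a H; [lia|].
  change (seq a (S n)) with (a :: seq (S a) n); rewrite sum_list_cons.
  destruct (Nat.eq_dec a x).
  - subst x; rewrite sum_list_zero; [ring|].
    intros y Hy; apply in_seq in Hy; destruct (Nat.eq_dec y a); [lia | reflexivity].
  - rewrite IHn by lia; ring.
Qed.

(** * The one-step recursion of the PORT *)

Lemma hist_SS m :
  hist (S (S m)) = flat_map (fun h => map (fun i => h ++ [i]) (seq 1 (S m))) (hist (S m)).
Proof. reflexivity. Qed.

Lemma hist_spec m h : (1 <= m)%nat -> In h (hist m) ->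
  length h = (m - 1)%nat /\ (forall x, In x h -> (1 <= x <= m - 1)%nat).
Proof.
  intros Hm; destruct m as [|m]; [lia|]; clear Hm; revert h.
  induction m; intros h Hh.
  - destruct Hh as [<-|[]]; split; [reflexivity | intros x []].
  - rewrite hist_SS in Hh; apply in_flat_map in Hh; destruct Hh as [h0 [Hh0 Hi]].
    apply in_map_iff in Hi; destruct Hi as [i [<- Hi]]; apply in_seq in Hi.
    destruct (IHm h0 Hh0) as [Hlen Hrange]; split.
    + rewrite length_app; simpl; lia.
    + intros x Hx; apply in_app_or in Hx.
      destruct Hx as [Hx|[<-|[]]]; [specialize (Hrange x Hx)|]; lia.
Qed.

Lemma weight_snoc h i :
  weight (h ++ [i]) = weight h * (INR (children i h) + 1) / (2 * INR (length h + 2) - 3).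
Proof.
  unfold weight; rewrite rev_app_distr; simpl.
  unfold children; rewrite count_occ_rev, length_rev; reflexivity.
Qed.

Lemma children_snoc j h i :
  INR (children j (h ++ [i])) = INR (children j h) + (if Nat.eq_dec i j then 1 else 0).
Proof.
  unfold children; rewrite count_occ_app, plus_INR; simpl.
  destruct (Nat.eq_dec i j); simpl; ring.
Qed.

Lemma sum_list_children h m : (forall x, In x h -> (1 <= x <= m)%nat) ->
  sum_list (seq 1 m) (fun i => INR (children i h)) = INR (length h).
Proof.
  induction h as [|x h IH]; intros H.
  - now apply sum_list_zero.
  - transitivity (sum_list (seq 1 m) (fun i => (if Nat.eq_dec i x then 1 else 0) + INR (children i h))).
    + apply sum_list_ext; intros i _; unfold children; simpl.
      destruct (Nat.eq_dec x i), (Nat.eq_dec i x); try lia; [rewrite S_INR|]; ring.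
    + assert (Hx := H x (or_introl eq_refl)).
      rewrite sum_list_plus, sum_list_seq_indicator, IH by (simpl in *; auto; lia).
      simpl length; rewrite S_INR; ring.
Qed.

Lemma sum_list_attach m j h (g : R -> R) :
  (1 <= j <= m)%nat -> length h = (m - 1)%nat -> (forall x, In x h -> (1 <= x <= m)%nat) ->
  sum_list (seq 1 m) (fun i => weight (h ++ [i]) * g (INR (children j (h ++ [i])))) =
  weight h * (g (INR (children j h)) + (INR (children j h) + 1) / (2 * INR m - 1)
                * (g (INR (children j h) + 1) - g (INR (children j h)))).
Proof.
  intros Hj Hlen Hrange.
  set (c := INR (children j h)).
  set (K := weight h / (2 * INR m - 1)).
  assert (Hm : 1 <= INR m) by (apply (le_INR 1); lia).
  assert (Hlen' : INR (length h + 2) = INR m + 1).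
  { rewrite Hlen, plus_INR, minus_INR by lia; simpl; ring. }
  transitivity (sum_list (seq 1 m) (fun i => K * g c * (INR (children i h) + 1)
                   + (if Nat.eq_dec i j then K * (c + 1) * (g (c + 1) - g c) else 0))).
  - apply sum_list_ext; intros i _.
    rewrite weight_snoc, children_snoc, Hlen'; unfold K, c.
    destruct (Nat.eq_dec i j) as [<-|]; [|rewrite Rplus_0_r]; field; lra.
  - rewrite sum_list_plus, sum_list_seq_indicator by lia.
    rewrite sum_list_scal, sum_list_plus, sum_list_children, sum_list_seq_const by auto.
    rewrite Hlen, minus_INR by lia; unfold K; simpl; field; lra.
Qed.

Lemma Expect_sum_list n f : Expect n f = sum_list (hist n) (fun h => weight h * f h).
Proof. reflexivity. Qed.

Lemma Expect_step m j (g : R -> R) : (1 <= j <= m)%nat ->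
  Expect (S m) (fun h => g (INR (children j h))) =
  Expect m (fun h => g (INR (children j h)) + (INR (children j h) + 1) / (2 * INR m - 1)
                       * (g (INR (children j h) + 1) - g (INR (children j h)))).
Proof.
  intros Hj; destruct m as [|m]; [lia|].
  rewrite !Expect_sum_list, hist_SS, sum_list_flat_map.
  apply sum_list_ext; intros h Hh.
  destruct (hist_spec (S m) h ltac:(lia) Hh) as [Hlen Hrange].
  rewrite sum_list_map; apply sum_list_attach; auto.
  intros x Hx; specialize (Hrange x Hx); lia.
Qed.

Lemma Expect_ext n f g : (forall h, In h (hist n) -> f h = g h) -> Expect n f = Expect n g.
Proof. intros H; rewrite !Expect_sum_list; apply sum_list_ext; intros h Hh; now rewrite H. Qed.

Lemma Expect_plus n f g : Expect n (fun h => f h + g h) = Expect n f + Expect n g.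
Proof.
  rewrite !Expect_sum_list, <- sum_list_plus; apply sum_list_ext; intros; ring.
Qed.

Lemma Expect_scal n c f : Expect n (fun h => c * f h) = c * Expect n f.
Proof.
  rewrite !Expect_sum_list, <- sum_list_scal; apply sum_list_ext; intros; ring.
Qed.

Lemma Expect_one n : (1 <= n)%nat -> Expect n (fun _ => 1) = 1.
Proof.
  induction n as [|[|m] IH]; intros Hn; [lia | unfold Expect, weight; simpl; ring |].
  rewrite (Expect_step (S m) 1 (fun _ => 1)) by lia.
  transitivity (Expect (S m) (fun _ => 1)); [apply Expect_ext; intros; ring | apply IH; lia].
Qed.

Lemma Expect_const n c : (1 <= n)%nat -> Expect n (fun _ => c) = c.
Proof.
  intros Hn; transitivity (c * Expect n (fun _ => 1)).
  - rewrite <- Expect_scal; apply Expect_ext; intros; ring.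
  - rewrite Expect_one by exact Hn; ring.
Qed.

Lemma Expect_children_self j (g : R -> R) : (1 <= j)%nat ->
  Expect j (fun h => g (INR (children j h))) = g 0.
Proof.
  intros Hj; rewrite <- (Expect_const j (g 0) Hj); apply Expect_ext; intros h Hh.
  destruct (hist_spec j h Hj Hh) as [_ Hrange]; unfold children.
  rewrite (proj1 (count_occ_not_In Nat.eq_dec h j)); [reflexivity|].
  intros Hin; specialize (Hrange j Hin); lia.
Qed.

(** * Closed forms of the first two moments *)

Fixpoint wallis_prod (j d : nat) : R :=
  match d with
  | O => 1
  | S d' => wallis_prod j d' * (2 * INR (j + d')) / (2 * INR (j + d') - 1)
  end.

Lemma wallis_prod_S j d :
  wallis_prod j (S d) = wallis_prod j d * (2 * INR (j + d)) / (2 * INR (j + d) - 1).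
Proof. reflexivity. Qed.

Lemma wallis_prod_pos j d : (1 <= j)%nat -> 0 < wallis_prod j d.
Proof.
  intros Hj; induction d; simpl; [lra|].
  assert (1 <= INR (j + d)) by (apply (le_INR 1); lia).
  apply Rmult_lt_0_compat; [apply Rmult_lt_0_compat; lra | apply Rinv_0_lt_compat; lra].
Qed.

Lemma wallis_prod_add a d e : wallis_prod a (d + e) = wallis_prod a d * wallis_prod (a + d) e.
Proof.
  induction e; [rewrite Nat.add_0_r; simpl; ring|].
  rewrite Nat.add_succ_r, !wallis_prod_S, IHe, Nat.add_assoc.
  destruct (a + d + e)%nat as [|k]; [simpl; field|].
  assert (1 <= INR (S k)) by (apply (le_INR 1); lia); field; lra.
Qed.

Lemma Expect_children_plus1 j d : (1 <= j)%nat ->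
  Expect (j + d) (fun h => INR (children j h) + 1) = wallis_prod j d.
Proof.
  intros Hj; induction d.
  - rewrite Nat.add_0_r, (Expect_children_self j (fun x => x + 1)) by exact Hj; simpl; ring.
  - rewrite Nat.add_succ_r, (Expect_step (j + d) j (fun x => x + 1)) by lia.
    assert (1 <= INR (j + d)) by (apply (le_INR 1); lia).
    transitivity (2 * INR (j + d) / (2 * INR (j + d) - 1) *
       Expect (j + d) (fun h => INR (children j h) + 1)).
    + rewrite <- Expect_scal; apply Expect_ext; intros h _; field; lra.
    + rewrite IHd, wallis_prod_S; field; lra.
Qed.

Lemma Expect_children_rising2 j d : (1 <= j)%nat ->
  Expect (j + d) (fun h => (INR (children j h) + 1) * (INR (children j h) + 2)) =
  2 * (2 * INR (j + d) - 1) / (2 * INR j - 1).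
Proof.
  intros Hj; assert (1 <= INR j) by (apply (le_INR 1); lia); induction d.
  - rewrite Nat.add_0_r, (Expect_children_self j (fun x => (x + 1) * (x + 2))) by exact Hj.
    field; lra.
  - rewrite Nat.add_succ_r, (Expect_step (j + d) j (fun x => (x + 1) * (x + 2))) by lia.
    assert (1 <= INR (j + d)) by (apply (le_INR 1); lia).
    transitivity ((2 * INR (j + d) + 1) / (2 * INR (j + d) - 1) *
       Expect (j + d) (fun h => (INR (children j h) + 1) * (INR (children j h) + 2))).
    + rewrite <- Expect_scal; apply Expect_ext; intros h _; field; lra.
    + rewrite IHd, S_INR; field; lra.
Qed.

Definition parent_edge (j : nat) : R := if Nat.leb 2 j then 1 else 0.

(* For [j <= n], the mean of [c_{n,j} + 1]. *)
Definition wallis_between (j n : nat) : R := wallis_prod j (n - j).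

Lemma INR_deg j h : INR (deg j h) = INR (children j h) + parent_edge j.
Proof. unfold deg, parent_edge; rewrite plus_INR; destruct (Nat.leb 2 j); simpl; ring. Qed.

Lemma parent_edge_ge2 j : (2 <= j)%nat -> parent_edge j = 1.
Proof. intros H; unfold parent_edge; now rewrite (proj2 (Nat.leb_le 2 j) H). Qed.

Lemma ED_closed n j : (1 <= j <= n)%nat -> ED n j = wallis_between j n + parent_edge j - 1.
Proof.
  intros H; unfold ED, wallis_between.
  rewrite <- Expect_children_plus1, (Nat.add_comm j), Nat.sub_add by lia.
  transitivity (Expect n (fun h => INR (children j h) + 1) + Expect n (fun _ => parent_edge j - 1)).
  - rewrite <- Expect_plus; apply Expect_ext; intros h _; rewrite INR_deg; ring.
  - rewrite Expect_const by lia; ring.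
Qed.

Lemma VarD_closed n j : (1 <= j <= n)%nat ->
  VarD n j = 2 * (2 * INR n - 1) / (2 * INR j - 1)
             - wallis_between j n - wallis_between j n ^ 2.
Proof.
  intros H; unfold VarD; rewrite ED_closed by exact H.
  pose proof (Expect_children_rising2 j (n - j) ltac:(lia)) as E2.
  rewrite (Nat.add_comm j), Nat.sub_add in E2 by lia; rewrite <- E2; unfold wallis_between.
  rewrite <- (Expect_children_plus1 j (n - j)), (Nat.add_comm j), Nat.sub_add by lia.
  set (e := parent_edge j).
  transitivity (Expect n (fun h => (INR (children j h) + 1) * (INR (children j h) + 2)
       + (2 * e - 3) * (INR (children j h) + 1) + (e - 1) ^ 2)
       - (Expect n (fun h => INR (children j h) + 1) + e - 1) ^ 2).
  - f_equal; apply Expect_ext; intros h _; rewrite INR_deg; fold e; ring.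
  - rewrite 2!Expect_plus, Expect_scal, Expect_const by lia; ring.
Qed.

(** * Wallis' integrals *)

Definition sin_pow_integral (n : nat) : R := RInt (fun x => sin x ^ n) 0 (PI / 2).

Lemma is_RInt_sin_pow n : is_RInt (fun x => sin x ^ n) 0 (PI / 2) (sin_pow_integral n).
Proof.
  apply (@RInt_correct R_CompleteNormedModule), (@ex_RInt_continuous R_CompleteNormedModule).
  intros z _; apply continuity_pt_filterlim; reg.
Qed.

Lemma sin_pow_integral_0 : sin_pow_integral 0 = PI / 2.
Proof.
  unfold sin_pow_integral; simpl; rewrite RInt_const; unfold scal; simpl; unfold mult; simpl; ring.
Qed.

Lemma sin_pow_integral_1 : sin_pow_integral 1 = 1.
Proof.
  assert (H : is_RInt (fun x => sin x ^ 1) 0 (PI / 2) (minus (- cos (PI / 2)) (- cos 0))).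
  { apply (@is_RInt_derive R_CompleteNormedModule (fun x => - cos x)).
    - intros x _; auto_derive; [auto | ring].
    - intros x _; apply continuity_pt_filterlim; reg. }
  apply (@is_RInt_unique R_CompleteNormedModule) in H; unfold sin_pow_integral; rewrite H.
  rewrite cos_PI2, cos_0; unfold minus, plus, opp; simpl; ring.
Qed.

(* Integration by parts, with [- sin^(k+1) cos] as antiderivative of
   [(k+2) sin^(k+2) - (k+1) sin^k]. *)
Lemma sin_pow_integral_rec k :
  INR (k + 2) * sin_pow_integral (k + 2) = INR (k + 1) * sin_pow_integral k.
Proof.
  assert (Hparts : is_RInt (fun x => INR (k + 2) * sin x ^ (k + 2) - INR (k + 1) * sin x ^ k) 0 (PI / 2)
     (minus (- (sin (PI / 2) ^ (k + 1) * cos (PI / 2))) (- (sin 0 ^ (k + 1) * cos 0)))).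
  { apply (@is_RInt_derive R_CompleteNormedModule (fun x => - (sin x ^ (k + 1) * cos x))).
    - intros x _; auto_derive; [auto|].
      assert (Hc : cos x * cos x = 1 - sin x * sin x)
        by (pose proof (sin2_cos2 x); unfold Rsqr in *; lra).
      rewrite !Nat.add_succ_r, Nat.add_0_r, !S_INR; simpl pow.
      transitivity (- (INR k + 1) * sin x ^ k * (cos x * cos x) + sin x * sin x * sin x ^ k);
        [ring | rewrite Hc; ring].
    - intros x _; apply continuity_pt_filterlim; reg. }
  rewrite cos_PI2, sin_0, pow_i in Hparts by lia.
  replace (minus (- (sin (PI / 2) ^ (k + 1) * 0)) (- (0 * cos 0))) with 0 in Hparts
    by (unfold minus, plus, opp; simpl; ring).
  pose proof (is_RInt_minus _ _ _ _ _ _ (is_RInt_scal _ _ _ (INR (k + 2)) _ (is_RInt_sin_pow (k + 2)))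
                 (is_RInt_scal _ _ _ (INR (k + 1)) _ (is_RInt_sin_pow k))) as Hlin.
  enough (E : INR (k + 2) * sin_pow_integral (k + 2) - INR (k + 1) * sin_pow_integral k = 0) by lra.
  etransitivity; [symmetry; exact (is_RInt_unique _ _ _ _ Hlin) | exact (is_RInt_unique _ _ _ _ Hparts)].
Qed.

Lemma sin_pow_integral_decr n : sin_pow_integral (S n) <= sin_pow_integral n.
Proof.
  apply RInt_le; [pose proof PI_RGT_0; lra | eexists; apply is_RInt_sin_pow
                 | eexists; apply is_RInt_sin_pow |].
  intros x Hx; simpl.
  assert (0 <= sin x) by (apply sin_ge_0; pose proof PI_RGT_0; lra).
  assert (sin x <= 1) by apply SIN_bound.
  assert (0 <= sin x ^ n) by (apply pow_le; lra); nra.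
Qed.

Lemma sin_pow_integral_closed m :
  sin_pow_integral (2 * m) * wallis_prod 1 m = PI / 2 /\
  sin_pow_integral (2 * m + 1) * INR (2 * m + 1) = wallis_prod 1 m.
Proof.
  induction m as [|m [IH1 IH2]].
  - simpl; rewrite sin_pow_integral_0, sin_pow_integral_1; simpl; lra.
  - pose proof (sin_pow_integral_rec (2 * m)) as R1; pose proof (sin_pow_integral_rec (2 * m + 1)) as R2.
    replace (2 * S m)%nat with (2 * m + 2)%nat by lia.
    replace (2 * S m + 1)%nat with (2 * m + 1 + 2)%nat by lia.
    replace (2 * m + 1 + 1)%nat with (2 * m + 2)%nat in R2 by lia.
    rewrite wallis_prod_S; rewrite !plus_INR, !mult_INR in *.
    replace (INR 2) with 2 in * by (simpl; lra); replace (INR 1) with 1 in * by reflexivity.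
    assert (0 <= INR m) by apply pos_INR.
    split.
    + assert (E : sin_pow_integral (2 * m + 2)
                  = (2 * INR m + 1) / (2 * INR m + 2) * sin_pow_integral (2 * m))
        by (apply (Rmult_eq_reg_l (2 * INR m + 2)); [rewrite R1; field |]; lra).
      rewrite E, <- IH1; field; lra.
    + assert (E : sin_pow_integral (2 * m + 1 + 2)
                  = (2 * INR m + 2) / (2 * INR m + 3) * sin_pow_integral (2 * m + 1)).
      { apply (Rmult_eq_reg_l (2 * INR m + 3)); [|lra].
        replace (2 * INR m + 3) with (2 * INR m + 1 + 2) by ring; rewrite R2; field; lra. }
      replace (2 * m + 2 + 1)%nat with (2 * m + 1 + 2)%nat by lia.
      rewrite E, <- IH2; field; lra.
Qed.

Lemma wallis_prod_1_sqr_upper m : 2 * wallis_prod 1 m ^ 2 <= PI * (2 * INR m + 1).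
Proof.
  destruct (sin_pow_integral_closed m) as [Heven Hodd].
  pose proof (sin_pow_integral_decr (2 * m)) as D; rewrite <- Nat.add_1_r in D.
  pose proof (wallis_prod_pos 1 m (le_n 1)) as W.
  assert (N : INR (2 * m + 1) = 2 * INR m + 1) by (rewrite plus_INR, mult_INR; simpl; ring).
  rewrite N in Hodd; assert (0 <= INR m) by apply pos_INR.
  (* [2 w^2 = 2 w I(2m+1) (2m+1) <= 2 w I(2m) (2m+1) = pi (2m+1)] *)
  assert (0 <= 2 * wallis_prod 1 m * (2 * INR m + 1)) by nra.
  nra.
Qed.

Lemma wallis_prod_1_sqr_lower m : PI * INR m <= wallis_prod 1 m ^ 2.
Proof.
  destruct m as [|m]; [simpl; lra|].
  destruct (sin_pow_integral_closed m) as [_ Hodd].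
  destruct (sin_pow_integral_closed (S m)) as [Heven _].
  pose proof (sin_pow_integral_decr (2 * m + 1)) as D.
  replace (S (2 * m + 1)) with (2 * S m)%nat in D by lia.
  assert (N : INR (2 * m + 1) = 2 * INR m + 1) by (rewrite plus_INR, mult_INR; simpl; ring).
  rewrite N in Hodd; rewrite S_INR; assert (0 <= INR m) by apply pos_INR.
  assert (Hw : wallis_prod 1 m * (2 * INR m + 2) = wallis_prod 1 (S m) * (2 * INR m + 1)).
  { rewrite wallis_prod_S; replace (INR (1 + m)) with (INR m + 1) by (rewrite S_INR; f_equal; lia).
    field; lra. }
  pose proof (wallis_prod_pos 1 (S m) (le_n 1)) as W'.
  set (w' := wallis_prod 1 (S m)) in *.
  (* [pi/2 = I(2m+2) w' <= I(2m+1) w' = w w' / (2m+1)], and [w (2m+2) = w' (2m+1)] *)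
  assert (Hpi : PI / 2 * (2 * INR m + 1) <= wallis_prod 1 m * w').
  { rewrite <- Hodd, <- Heven.
    apply (Rmult_le_compat_r (w' * (2 * INR m + 1))) in D; [nra | nra]. }
  apply Rmult_le_reg_r with (2 * (2 * INR m + 1)); [lra|].
  replace (w' ^ 2 * (2 * (2 * INR m + 1))) with (2 * w' * (wallis_prod 1 m * (2 * INR m + 2)))
    by (rewrite Hw; ring).
  nra.
Qed.

Lemma PI_lt_4 : PI < 4.
Proof. pose proof (wallis_prod_1_sqr_lower 2) as L; simpl in L; lra. Qed.

(** * Asymptotics *)

Lemma is_lim_seq_inv_p_infty (u : nat -> R) :
  is_lim_seq u p_infty -> is_lim_seq (fun n => / u n) 0.
Proof. intros H; apply (is_lim_seq_inv u p_infty H); discriminate. Qed.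

Lemma is_lim_seq_inv_INR : is_lim_seq (fun n => / INR n) 0.
Proof. apply is_lim_seq_inv_p_infty, is_lim_seq_INR. Qed.

Lemma is_lim_seq_sqrt (u : nat -> R) (l : R) :
  0 <= l -> is_lim_seq u l -> is_lim_seq (fun n => sqrt (u n)) (sqrt l).
Proof. intros Hl H; apply is_lim_seq_continuous; [apply continuity_pt_sqrt |]; auto. Qed.

Lemma is_lim_seq_inv_sqrt_INR : is_lim_seq (fun n => / sqrt (INR n)) 0.
Proof.
  rewrite <- sqrt_0; apply (is_lim_seq_ext (fun n => sqrt (/ INR n))); [intros; apply sqrt_inv|].
  apply is_lim_seq_sqrt, is_lim_seq_inv_INR; lra.
Qed.

Lemma wallis_prod_1_sqr_lim : is_lim_seq (fun n => wallis_prod 1 (n - 1) ^ 2 / INR n) PI.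
Proof.
  apply is_lim_seq_le_le_loc with (u := fun n => PI * (1 - / INR n)) (w := fun _ => PI).
  - exists 1%nat; intros n Hn; assert (1 <= INR n) by (apply (le_INR 1); lia).
    pose proof (wallis_prod_1_sqr_lower (n - 1)) as L; pose proof (wallis_prod_1_sqr_upper (n - 1)) as U.
    rewrite minus_INR in L, U by lia; simpl INR in L, U; pose proof PI_RGT_0.
    split; apply Rmult_le_reg_r with (INR n); try lra.
    + replace (PI * (1 - / INR n) * INR n) with (PI * (INR n - 1)) by (field; lra).
      replace (wallis_prod 1 (n - 1) ^ 2 / INR n * INR n) with (wallis_prod 1 (n - 1) ^ 2)
        by (field; lra); lra.
    + replace (wallis_prod 1 (n - 1) ^ 2 / INR n * INR n) with (wallis_prod 1 (n - 1) ^ 2)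
        by (field; lra); lra.
  - replace (Finite PI) with (Finite (PI * (1 - 0))) by (f_equal; ring).
    apply is_lim_seq_mult', is_lim_seq_minus'; [apply is_lim_seq_const .. | apply is_lim_seq_inv_INR].
  - apply is_lim_seq_const.
Qed.

Lemma wallis_prod_1_lim : is_lim_seq (fun n => wallis_prod 1 (n - 1) / sqrt (INR n)) (sqrt PI).
Proof.
  apply is_lim_seq_ext_loc with (u := fun n => sqrt (wallis_prod 1 (n - 1) ^ 2 / INR n)).
  - exists 1%nat; intros n Hn; assert (0 < INR n) by (apply lt_0_INR; lia).
    rewrite sqrt_div_alt, sqrt_pow2 by (auto; apply Rlt_le, wallis_prod_pos; lia); reflexivity.
  - apply is_lim_seq_sqrt; [pose proof PI_RGT_0; lra | apply wallis_prod_1_sqr_lim].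
Qed.

Lemma wallis_prod_gamma_half k : wallis_prod 1 k * gamma_half k = sqrt PI * INR (Factorial.fact k).
Proof.
  induction k; [simpl; ring|].
  rewrite wallis_prod_S; simpl gamma_half; rewrite fact_simpl, mult_INR, S_INR.
  replace (INR (1 + k)) with (INR k + 1) by (rewrite <- S_INR; reflexivity).
  assert (0 <= INR k) by apply pos_INR.
  transitivity (wallis_prod 1 k * gamma_half k * (INR k + 1)); [field; lra|].
  rewrite IHk, S_INR; ring.
Qed.

Lemma gratio_wallis j : (1 <= j)%nat -> gratio j = sqrt PI / wallis_prod 1 (j - 1).
Proof.
  intros Hj; unfold gratio, gamma_nat.
  pose proof (wallis_prod_pos 1 (j - 1) (le_n 1)).
  pose proof (lt_0_INR _ (Factorial.lt_O_fact (j - 1))).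
  transitivity (wallis_prod 1 (j - 1) * gamma_half (j - 1)
                / (wallis_prod 1 (j - 1) * INR (Factorial.fact (j - 1)))); [field; lra|].
  rewrite wallis_prod_gamma_half; field; lra.
Qed.

Lemma wallis_prod_1_between j n : (1 <= j <= n)%nat ->
  wallis_prod 1 (n - 1) = wallis_prod 1 (j - 1) * wallis_between j n.
Proof.
  intros H; unfold wallis_between.
  replace (n - 1)%nat with (j - 1 + (n - j))%nat by lia.
  rewrite wallis_prod_add; do 2 f_equal; lia.
Qed.

Lemma wallis_between_fixed_lim j : (1 <= j)%nat ->
  is_lim_seq (fun n => wallis_between j n / sqrt (INR n)) (gratio j).
Proof.
  intros Hj; rewrite gratio_wallis by exact Hj.
  pose proof (wallis_prod_pos 1 (j - 1) (le_n 1)).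
  apply is_lim_seq_ext_loc
    with (u := fun n => wallis_prod 1 (n - 1) / sqrt (INR n) / wallis_prod 1 (j - 1)).
  - exists j; intros n Hn; rewrite (wallis_prod_1_between j n) by lia; field.
    split; [|lra]; apply Rgt_not_eq, sqrt_lt_R0, lt_0_INR; lia.
  - apply is_lim_seq_div'; [apply wallis_prod_1_lim | apply is_lim_seq_const | lra].
Qed.

Lemma gratio_sqr_lt j : (1 <= j)%nat -> gratio j ^ 2 < 4 / (2 * INR j - 1).
Proof.
  intros Hj; rewrite gratio_wallis by exact Hj.
  pose proof (wallis_prod_pos 1 (j - 1) (le_n 1)) as W.
  pose proof (wallis_prod_1_sqr_lower (j - 1)) as L.
  assert (HJ : 1 <= INR j) by (apply (le_INR 1); lia).
  rewrite minus_INR in L by lia; simpl INR in L.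
  replace ((sqrt PI / wallis_prod 1 (j - 1)) ^ 2) with (PI / wallis_prod 1 (j - 1) ^ 2)
    by (unfold Rdiv; rewrite Rpow_mult_distr, pow2_sqrt, pow_inv;
        [reflexivity | pose proof PI_RGT_0; lra]).
  pose proof PI_lt_4; pose proof PI_RGT_0.
  apply Rmult_lt_reg_r with (wallis_prod 1 (j - 1) ^ 2 * (2 * INR j - 1)); [nra|].
  replace (PI / wallis_prod 1 (j - 1) ^ 2 * (wallis_prod 1 (j - 1) ^ 2 * (2 * INR j - 1)))
    with (PI * (2 * INR j - 1)) by (field; lra).
  replace (4 / (2 * INR j - 1) * (wallis_prod 1 (j - 1) ^ 2 * (2 * INR j - 1)))
    with (4 * wallis_prod 1 (j - 1) ^ 2) by (field; lra).
  (* [j = 1] uses [pi < 4]; [j >= 2] uses Wallis' lower bound [pi (j-1) <= W^2] *)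
  destruct (Nat.eq_dec j 1) as [->|]; [simpl in *; lra|].
  assert (2 <= INR j) by (apply (le_INR 2); lia); nra.
Qed.

Lemma wallis_prod_sqr_S j d :
  wallis_prod j (S d) ^ 2
  = wallis_prod j d ^ 2 * ((2 * INR (j + d)) ^ 2 / (2 * INR (j + d) - 1) ^ 2).
Proof.
  rewrite wallis_prod_S; unfold Rdiv; rewrite !Rpow_mult_distr, pow_inv; ring.
Qed.

Lemma wallis_prod_sqr_lower j d : (1 <= j)%nat ->
  (2 * INR (j + d) - 1) / (2 * INR j - 1) <= wallis_prod j d ^ 2.
Proof.
  intros Hj; assert (1 <= INR j) by (apply (le_INR 1); lia).
  induction d.
  - rewrite Nat.add_0_r; simpl; right; field; lra.
  - rewrite wallis_prod_sqr_S, Nat.add_succ_r, S_INR.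
    assert (1 <= INR (j + d)) by (apply (le_INR 1); lia); set (x := INR (j + d)) in *.
    replace ((2 * (x + 1) - 1) / (2 * INR j - 1))
      with ((2 * x - 1) / (2 * INR j - 1) * ((2 * x + 1) / (2 * x - 1))) by (field; lra).
    apply Rmult_le_compat; [apply Rdiv_le_0_compat; lra | apply Rdiv_le_0_compat; lra | exact IHd |].
    apply Rmult_le_reg_r with ((2 * x - 1) ^ 2); [nra|].
    replace ((2 * x) ^ 2 / (2 * x - 1) ^ 2 * (2 * x - 1) ^ 2) with ((2 * x) ^ 2) by (field; lra).
    replace ((2 * x + 1) / (2 * x - 1) * (2 * x - 1) ^ 2) with ((2 * x + 1) * (2 * x - 1))
      by (field; lra); nra.
Qed.

Lemma wallis_prod_sqr_upper j d : (2 <= j)%nat ->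
  wallis_prod j d ^ 2 <= (INR (j + d) - 1) / (INR j - 1).
Proof.
  intros Hj; assert (2 <= INR j) by (apply (le_INR 2); lia).
  induction d.
  - rewrite Nat.add_0_r; simpl; right; field; lra.
  - rewrite wallis_prod_sqr_S, Nat.add_succ_r, S_INR.
    assert (2 <= INR (j + d)) by (apply (le_INR 2); lia); set (x := INR (j + d)) in *.
    replace ((x + 1 - 1) / (INR j - 1)) with ((x - 1) / (INR j - 1) * (x / (x - 1))) by (field; lra).
    apply Rmult_le_compat; [nra | apply Rdiv_le_0_compat; nra | exact IHd |].
    apply Rmult_le_reg_r with ((x - 1) * (2 * x - 1) ^ 2); [nra|].
    replace ((2 * x) ^ 2 / (2 * x - 1) ^ 2 * ((x - 1) * (2 * x - 1) ^ 2)) with ((2 * x) ^ 2 * (x - 1))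
      by (field; lra).
    replace (x / (x - 1) * ((x - 1) * (2 * x - 1) ^ 2)) with (x * (2 * x - 1) ^ 2) by (field; lra).
    nra.
Qed.

Lemma wallis_between_sqr_bounds j n : (2 <= j <= n)%nat ->
  INR n / INR j <= wallis_between j n ^ 2 <= INR n / (INR j - 1).
Proof.
  intros H; unfold wallis_between.
  pose proof (wallis_prod_sqr_lower j (n - j) ltac:(lia)) as L.
  pose proof (wallis_prod_sqr_upper j (n - j) ltac:(lia)) as U.
  replace (j + (n - j))%nat with n in * by lia.
  assert (2 <= INR j) by (apply (le_INR 2); lia); assert (INR j <= INR n) by (apply le_INR; lia).
  split; eapply Rle_trans; [| exact L | exact U |].
  - apply Rmult_le_reg_r with (INR j * (2 * INR j - 1)); [nra|].
    replace (INR n / INR j * (INR j * (2 * INR j - 1))) with (INR n * (2 * INR j - 1)) by (field; lra).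
    replace ((2 * INR n - 1) / (2 * INR j - 1) * (INR j * (2 * INR j - 1)))
      with ((2 * INR n - 1) * INR j) by (field; lra); nra.
  - apply Rmult_le_compat_r; [apply Rlt_le, Rinv_0_lt_compat |]; lra.
Qed.

Lemma nat_to_infty_lim jf : nat_to_infty jf -> is_lim_seq (fun n => INR (jf n)) p_infty.
Proof.
  intros H; apply is_lim_seq_spec; intros M.
  destruct (INR_unbounded M) as [k Hk]; destruct (H k) as [N HN]; exists N.
  intros n Hn; apply Rlt_le_trans with (INR k); [lra | apply le_INR, HN, Hn].
Qed.

Lemma eventually_two_le jf : is_lim_seq (fun n => INR (jf n)) p_infty ->
  eventually (fun n => (2 <= jf n)%nat).
Proof.
  intros H; apply is_lim_seq_spec in H.
  apply (filter_imp (fun n => INR 1 < INR (jf n))); [intros n Hn; apply INR_lt in Hn; lia | apply H].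
Qed.

Lemma eventually_le_of_ratio_lim jf l : l < 1 ->
  is_lim_seq (fun n => INR (jf n) / INR n) l -> eventually (fun n => (jf n <= n)%nat).
Proof.
  intros Hl H; apply is_lim_seq_spec in H.
  assert (Hpos : 0 < 1 - l) by lra.
  apply (filter_imp (fun n => (1 <= n)%nat /\ Rabs (INR (jf n) / INR n - l) < mkposreal _ Hpos)).
  - intros n [Hn Habs]; simpl in Habs.
    assert (0 < INR n) by (apply lt_0_INR; lia).
    assert (Hlt : INR (jf n) / INR n < 1) by (pose proof (Rle_abs (INR (jf n) / INR n - l)); lra).
    apply INR_le; apply Rmult_lt_compat_r with (r := INR n) in Hlt; [| lra].
    unfold Rdiv in Hlt; rewrite Rmult_assoc, Rinv_l, Rmult_1_r in Hlt by lra; lra.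
  - apply filter_and; [exists 1%nat; auto | apply H].
Qed.

Lemma wallis_between_sqr_ratio_lim jf :
  is_lim_seq (fun n => INR (jf n)) p_infty -> eventually (fun n => (jf n <= n)%nat) ->
  is_lim_seq (fun n => wallis_between (jf n) n ^ 2 * INR (jf n) / INR n) 1.
Proof.
  intros Hinf Hle.
  apply is_lim_seq_le_le_loc with (u := fun _ => 1) (w := fun n => / (1 - / INR (jf n))).
  - apply (filter_imp (fun n => (2 <= jf n <= n)%nat));
      [| apply filter_and; [apply eventually_two_le, Hinf | exact Hle]].
    intros n Hn; destruct (wallis_between_sqr_bounds (jf n) n Hn) as [L U].
    assert (2 <= INR (jf n)) by (apply (le_INR 2); lia).
    assert (INR (jf n) <= INR n) by (apply le_INR; lia).
    split.
    + apply Rmult_le_reg_r with (INR n / INR (jf n)); [apply Rdiv_lt_0_compat; lra|].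
      replace (wallis_between (jf n) n ^ 2 * INR (jf n) / INR n * (INR n / INR (jf n)))
        with (wallis_between (jf n) n ^ 2) by (field; lra); lra.
    + replace (/ (1 - / INR (jf n))) with (INR n / (INR (jf n) - 1) * (INR (jf n) / INR n))
        by (field; lra).
      unfold Rdiv at 1; rewrite Rmult_assoc.
      apply Rmult_le_compat_r; [apply Rdiv_le_0_compat |]; lra.
  - apply is_lim_seq_const.
  - replace (Finite 1) with (Rbar_inv (1 - 0)) by (simpl; f_equal; field).
    apply is_lim_seq_inv; [| simpl; intros E; injection E; lra].
    apply is_lim_seq_minus'; [apply is_lim_seq_const|].
    apply is_lim_seq_inv_p_infty, Hinf.
Qed.

Lemma gratio_pos j : (1 <= j)%nat -> 0 < gratio j.
Proof.
  intros Hj; rewrite gratio_wallis by exact Hj.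
  apply Rdiv_lt_0_compat; [apply sqrt_lt_R0, PI_RGT_0 | apply wallis_prod_pos; lia].
Qed.

Lemma ED_fixed_lim j : (1 <= j)%nat ->
  is_lim_seq (fun n => ED n j / (gratio j * sqrt (INR n))) 1.
Proof.
  intros Hj; pose proof (gratio_pos j Hj).
  apply is_lim_seq_ext_loc with (u := fun n => wallis_between j n / sqrt (INR n) / gratio j
                                        + (parent_edge j - 1) / gratio j * / sqrt (INR n)).
  - exists j; intros n Hn.
    assert (0 < sqrt (INR n)) by (apply sqrt_lt_R0, lt_0_INR; lia).
    rewrite ED_closed by lia; field; lra.
  - replace (Finite 1) with (Finite (gratio j / gratio j + (parent_edge j - 1) / gratio j * 0))
      by (f_equal; field; lra).
    apply is_lim_seq_plus'.
    + apply is_lim_seq_div'; [apply wallis_between_fixed_lim, Hj | apply is_lim_seq_const | lra].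
    + apply is_lim_seq_mult'; [apply is_lim_seq_const | apply is_lim_seq_inv_sqrt_INR].
Qed.

Lemma VarD_fixed_lim j : (1 <= j)%nat ->
  is_lim_seq (fun n => VarD n j / ((4 / (2 * INR j - 1) - gratio j ^ 2) * INR n)) 1.
Proof.
  intros Hj; pose proof (gratio_sqr_lt j Hj) as Hc.
  assert (1 <= INR j) by (apply (le_INR 1); lia).
  set (c := 4 / (2 * INR j - 1) - gratio j ^ 2).
  assert (Hc0 : c <> 0) by (unfold c; lra).
  apply is_lim_seq_ext_loc with (u := fun n =>
    (2 * (2 - / INR n) / (2 * INR j - 1) - wallis_between j n / sqrt (INR n) * / sqrt (INR n)
     - (wallis_between j n / sqrt (INR n)) ^ 2) / c).
  - exists j; intros n Hn.
    assert (0 < INR n) by (apply lt_0_INR; lia).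
    assert (0 < sqrt (INR n)) by (apply sqrt_lt_R0; lra).
    assert (En : sqrt (INR n) * sqrt (INR n) = INR n) by (apply sqrt_sqrt; lra).
    rewrite VarD_closed by lia; set (s := sqrt (INR n)) in *; rewrite <- En.
    field; repeat split; lra.
  - replace (Finite 1) with (Finite ((2 * (2 - 0) / (2 * INR j - 1) - gratio j * 0 - gratio j ^ 2) / c)).
    2:{ f_equal; replace (2 * (2 - 0) / (2 * INR j - 1) - gratio j * 0 - gratio j ^ 2) with c
          by (unfold c; field; lra); field; exact Hc0. }
    apply is_lim_seq_div'; [| apply is_lim_seq_const | unfold c; lra].
    apply is_lim_seq_minus'; [apply is_lim_seq_minus' |].
    + apply is_lim_seq_div'; [| apply is_lim_seq_const | lra].
      apply is_lim_seq_mult'; [apply is_lim_seq_const |].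
      apply is_lim_seq_minus'; [apply is_lim_seq_const | apply is_lim_seq_inv_INR].
    + apply is_lim_seq_mult'; [apply wallis_between_fixed_lim, Hj | apply is_lim_seq_inv_sqrt_INR].
    + apply (is_lim_seq_continuous (fun x => x ^ 2));
        [apply derivable_continuous_pt, derivable_pt_pow | apply wallis_between_fixed_lim, Hj].
Qed.

Lemma ED_growing_lim jf :
  is_lim_seq (fun n => INR (jf n)) p_infty -> eventually (fun n => (jf n <= n)%nat) ->
  is_lim_seq (fun n => ED n (jf n) / sqrt (INR n / INR (jf n))) 1.
Proof.
  intros Hinf Hle.
  apply is_lim_seq_ext_loc with (u := fun n => sqrt (wallis_between (jf n) n ^ 2 * INR (jf n) / INR n)).
  - apply (filter_imp (fun n => (2 <= jf n <= n)%nat));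
      [| apply filter_and; [apply eventually_two_le, Hinf | exact Hle]].
    intros n Hn; rewrite ED_closed, parent_edge_ge2 by lia.
    assert (2 <= INR (jf n)) by (apply (le_INR 2); lia).
    assert (INR (jf n) <= INR n) by (apply le_INR; lia).
    pose proof (wallis_prod_pos (jf n) (n - jf n) ltac:(lia)); unfold wallis_between in *.
    replace (wallis_prod (jf n) (n - jf n) ^ 2 * INR (jf n) / INR n)
      with (wallis_prod (jf n) (n - jf n) ^ 2 / (INR n / INR (jf n))) by (field; lra).
    rewrite sqrt_div_alt, sqrt_pow2 by (try apply Rdiv_lt_0_compat; lra); f_equal; ring.
  - rewrite <- sqrt_1; apply is_lim_seq_sqrt; [lra | apply wallis_between_sqr_ratio_lim; auto].
Qed.

Lemma VarD_sublinear_lim jf :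
  is_lim_seq (fun n => INR (jf n)) p_infty -> is_lim_seq (fun n => INR (jf n) / INR n) 0 ->
  is_lim_seq (fun n => VarD n (jf n) / (INR n / INR (jf n))) 1.
Proof.
  intros Hinf Hr.
  pose proof (eventually_le_of_ratio_lim jf 0 ltac:(lra) Hr) as Hle.
  apply is_lim_seq_ext_loc with (u := fun n => 2 * (2 - / INR n) / (2 - / INR (jf n))
       - sqrt (wallis_between (jf n) n ^ 2 * INR (jf n) / INR n) * sqrt (INR (jf n) / INR n)
       - wallis_between (jf n) n ^ 2 * INR (jf n) / INR n).
  - apply (filter_imp (fun n => (2 <= jf n <= n)%nat));
      [| apply filter_and; [apply eventually_two_le, Hinf | exact Hle]].
    intros n Hn; rewrite VarD_closed by lia.
    assert (2 <= INR (jf n)) by (apply (le_INR 2); lia).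
    assert (INR (jf n) <= INR n) by (apply le_INR; lia).
    pose proof (wallis_prod_pos (jf n) (n - jf n) ltac:(lia)); unfold wallis_between in *.
    rewrite <- sqrt_mult_alt by (apply Rmult_le_pos; [nra | apply Rlt_le, Rinv_0_lt_compat; lra]).
    replace (wallis_prod (jf n) (n - jf n) ^ 2 * INR (jf n) / INR n * (INR (jf n) / INR n))
      with ((wallis_prod (jf n) (n - jf n) * INR (jf n) / INR n) ^ 2) by (field; lra).
    rewrite sqrt_pow2 by (apply Rdiv_le_0_compat; nra); field; lra.
  - replace (Finite 1) with (Finite (2 * (2 - 0) / (2 - 0) - sqrt 1 * sqrt 0 - 1))
      by (rewrite sqrt_0; f_equal; field).
    pose proof (wallis_between_sqr_ratio_lim jf Hinf Hle) as Hratio.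
    apply is_lim_seq_minus'; [apply is_lim_seq_minus' | exact Hratio].
    + apply is_lim_seq_div'; [| | lra].
      * apply is_lim_seq_mult'; [apply is_lim_seq_const |].
        apply is_lim_seq_minus'; [apply is_lim_seq_const | apply is_lim_seq_inv_INR].
      * apply is_lim_seq_minus'; [apply is_lim_seq_const | apply is_lim_seq_inv_p_infty, Hinf].
    + apply is_lim_seq_mult'; apply is_lim_seq_sqrt; auto; lra.
Qed.

Lemma ratio_lim_pos_infty jf l : 0 < l ->
  is_lim_seq (fun n => INR (jf n) / INR n) l -> is_lim_seq (fun n => INR (jf n)) p_infty.
Proof.
  intros Hl Hr.
  apply is_lim_seq_ext_loc with (u := fun n => INR (jf n) / INR n * INR n).
  - exists 1%nat; intros n Hn; assert (0 < INR n) by (apply lt_0_INR; lia); field; lra.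
  - apply (is_lim_seq_mult _ _ l p_infty); [exact Hr | apply is_lim_seq_INR |].
    apply is_Rbar_mult_sym, is_Rbar_mult_p_infty_pos; simpl; lra.
Qed.

Lemma VarD_linear_lim jf theta : 0 < theta < 1 ->
  is_lim_seq (fun n => INR (jf n) / INR n) theta ->
  is_lim_seq (fun n => VarD n (jf n)) (1 / theta - 1 / sqrt theta).
Proof.
  intros Ht Hr.
  pose proof (ratio_lim_pos_infty jf theta ltac:(lra) Hr) as Hinf.
  pose proof (eventually_le_of_ratio_lim jf theta ltac:(lra) Hr) as Hle.
  assert (Hev : eventually (fun n => (2 <= jf n <= n)%nat))
    by (apply filter_and; [apply eventually_two_le, Hinf | exact Hle]).
  assert (Hsqr : is_lim_seq (fun n => wallis_between (jf n) n ^ 2) (1 / theta)).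
  { apply is_lim_seq_ext_loc
      with (u := fun n => wallis_between (jf n) n ^ 2 * INR (jf n) / INR n / (INR (jf n) / INR n)).
    - refine (filter_imp _ _ _ Hev); intros n Hn.
      assert (2 <= INR (jf n)) by (apply (le_INR 2); lia).
      assert (INR (jf n) <= INR n) by (apply le_INR; lia); field; lra.
    - apply is_lim_seq_div'; [apply wallis_between_sqr_ratio_lim; auto | exact Hr | lra]. }
  apply is_lim_seq_ext_loc with (u := fun n => 2 * (2 - / INR n) / (2 * (INR (jf n) / INR n) - / INR n)
       - sqrt (wallis_between (jf n) n ^ 2) - wallis_between (jf n) n ^ 2).
  - refine (filter_imp _ _ _ Hev); intros n Hn.
    rewrite VarD_closed by lia.
    assert (2 <= INR (jf n)) by (apply (le_INR 2); lia).
    assert (INR (jf n) <= INR n) by (apply le_INR; lia).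
    pose proof (wallis_prod_pos (jf n) (n - jf n) ltac:(lia)); unfold wallis_between in *.
    rewrite sqrt_pow2 by lra; field; lra.
  - replace (Finite (1 / theta - 1 / sqrt theta))
      with (Finite (2 * (2 - 0) / (2 * theta - 0) - sqrt (1 / theta) - 1 / theta)).
    2:{ f_equal; rewrite sqrt_div_alt, sqrt_1 by lra.
        assert (0 < sqrt theta) by (apply sqrt_lt_R0; lra); field; split; lra. }
    apply is_lim_seq_minus'; [apply is_lim_seq_minus' | exact Hsqr].
    + apply is_lim_seq_div'; [| | lra].
      * apply is_lim_seq_mult'; [apply is_lim_seq_const |].
        apply is_lim_seq_minus'; [apply is_lim_seq_const | apply is_lim_seq_inv_INR].
      * apply is_lim_seq_minus'; [apply is_lim_seq_mult'; [apply is_lim_seq_const | exact Hr] |].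
        apply is_lim_seq_inv_INR.
    + apply is_lim_seq_sqrt; [apply Rlt_le, Rdiv_lt_0_compat |]; auto; lra.
Qed.

Theorem corollary3p2 :
  (forall j : nat, (1 <= j)%nat ->
     asym (fun n => ED n j) (fun n => gratio j * sqrt (INR n)) /\
     asym (fun n => VarD n j)
          (fun n => (4 / (2 * INR j - 1) - gratio j ^ 2) * INR n)) /\
  (forall jf : nat -> nat,
     (forall n, (1 <= n)%nat -> (1 <= jf n <= n)%nat) ->
     nat_to_infty jf ->
     asym (fun n => ED n (jf n)) (fun n => sqrt (INR n / INR (jf n)))) /\
  (forall jf : nat -> nat,
     (forall n, (1 <= jf n)%nat) ->
     nat_to_infty jf ->
     Un_cv (fun n => INR (jf n) / INR n) 0 ->
     asym (fun n => VarD n (jf n)) (fun n => INR n / INR (jf n))) /\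
  (forall (jf : nat -> nat) (theta : R),
     0 < theta < 1 ->
     (forall n, (1 <= jf n)%nat) ->
     Un_cv (fun n => INR (jf n) / INR n) theta ->
     Un_cv (fun n => VarD n (jf n)) (1 / theta - 1 / sqrt theta)).
Proof.
  unfold asym; split; [|split; [|split]].
  - intros j Hj; split; apply is_lim_seq_Reals; [apply ED_fixed_lim | apply VarD_fixed_lim]; exact Hj.
  - intros jf Hrange Hinf; apply is_lim_seq_Reals, ED_growing_lim; [apply nat_to_infty_lim, Hinf |].
    exists 1%nat; intros n Hn; apply (Hrange n Hn).
  - intros jf _ Hinf Hr; apply is_lim_seq_Reals, VarD_sublinear_lim;
      [apply nat_to_infty_lim, Hinf | apply is_lim_seq_Reals, Hr].
  - intros jf theta Ht _ Hr; apply is_lim_seq_Reals, VarD_linear_lim;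
      [exact Ht | apply is_lim_seq_Reals, Hr].
Qed.
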